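(* For every integer $n\ge 1$, the set \[U_n=\{t_it_{n+j}-t_jt_{n+i} : 1\le i<j\le n\}\] is a universal Gröbner basis of the toric ideal $I_{S_n}$, i.e. it is a Gröbner basis of $I_{S_n}$ with respect to every monomial order.
   Context: With $e_i\in\mathbb{R}^{n+1}$ the standard basis vectors, let $s_i=e_1+e_{i+1}+e_{n+1}$ for $1\le i<n$, $s_n=e_1+e_{n+1}$, $s_i=e_{i+1-n}+e_{n+1}$ for $n<i<2n$, $s_{2n}=e_{n+1}$ (the nonzero codewords of the homogeneous star code $S_n$). The toric ideal $I_{S_n}$ is the kernel of the ring homomorphism $\mathbb{C}[t_1,\dots,t_{2n}]\to\mathbb{C}[x_1,\dots,x_{n+1}]$, $t_i\mapsto x^{s_i}$, where $x^a=x_1^{a_1}\cdots x_{n+1}^{a_{n+1}}$. *)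

From mathcomp Require Import all_boot all_order all_algebra.
From mathcomp Require Import mpoly.
Set Implicit Arguments. Unset Strict Implicit. Unset Printing Implicit Defensive.
Import GRing.Theory.
Local Open Scope ring_scope.

(* A monomial order on the monomials 'X_{1..k} (exponent vectors):
   a total order, compatible with multiplication (addition of exponents),
   with 1 (exponent 0) the least element (hence a well-order by Dickson). *)
Definition monomial_order (k : nat) (le : rel 'X_{1..k}) : Prop :=
  [/\ reflexive le, antisymmetric le, transitive le & total le] /\
  (forall m, le 0%MM m) /\
  (forall m1 m2 u, le m1 m2 -> le (m1 + u)%MM (m2 + u)%MM).

Definition is_lead_mono (K : fieldType) (k : nat) (le : rel 'X_{1..k})
    (p : {mpoly K[k]}) (m : 'X_{1..k}) : bool :=
  (m \in msupp p) && all (fun m' => le m' m) (msupp p).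

Definition groebner_basis (K : fieldType) (k : nat) (le : rel 'X_{1..k})
    (I G : {mpoly K[k]} -> Prop) : Prop :=
  (forall g, G g -> I g) /\
  (forall f, I f -> f != 0 ->
     exists g, [/\ G g, g != 0 &
       exists mf mg, [/\ is_lead_mono le f mf, is_lead_mono le g mg &
                          (mg <= mf)%MM]]).

Definition universal_groebner_basis (K : fieldType) (k : nat)
    (I G : {mpoly K[k]} -> Prop) : Prop :=
  forall le : rel 'X_{1..k}, monomial_order le -> groebner_basis le I G.

(* e_i in R^{n+1}, 1-indexed: e i j = [i == j] *)
Definition e (i j : nat) : nat := (i == j).

(* s_i (1 <= i <= 2n) as an exponent function of the 1-indexed coordinate j *)
Definition s (n i j : nat) : nat :=
  (if i < n then e 1 j + e i.+1 j + e n.+1 j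
   else if i == n then e 1 j + e n.+1 j
   else if i < 2 * n then e (i.+1 - n) j + e n.+1 j
   else e n.+1 j)%N.

(* x^{s_i} in C[x_1,...,x_{n+1}]  (variable x_j is 'X_(j-1)) *)
Definition xs (K : fieldType) (n i : nat) : {mpoly K[n.+1]} :=
  'X_[[multinom s n i j.+1 | j < n.+1]].

(* t_a in C[t_1,...,t_{2n}]  (variable t_a is 'X_(a-1)), for 1 <= a <= 2n *)
Definition t (K : fieldType) (n a : nat) : {mpoly K[2 * n]} :=
  'X_[[multinom (j.+1 == a : nat) | j < 2 * n]].

Definition toric_map (K : fieldType) (n : nat) : (2 * n).-tuple {mpoly K[n.+1]} :=
  [tuple xs K n k.+1 | k < 2 * n].

Definition toric_ideal (K : fieldType) (n : nat) (p : {mpoly K[2 * n]}) : Prop :=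
  p \mPo toric_map K n = 0.

Definition U (K : fieldType) (n : nat) (g : {mpoly K[2 * n]}) : Prop :=
  exists i j : nat, [/\ (1 <= i)%N, (i < j)%N, (j <= n)%N &
    g = t K n i * t K n (n + j) - t K n j * t K n (n + i)].

From mathcomp Require Import all_boot all_order all_algebra.
From mathcomp Require Import mpoly zify.
Set Implicit Arguments. Unset Strict Implicit. Unset Printing Implicit Defensive.
Import GRing.Theory.
Local Open Scope ring_scope.

(* Read the exponents of a monomial in t_1, ..., t_2n as a 2 x n matrix with columns
   (t_c, t_(n+c)).  Its image under t_i |-> x^(s_i) records exactly the top-row sum and the
   column sums, and U_n consists of the differences t_i t_(n+j) - t_j t_(n+i) of two
   monomials of the same fiber.  As f lies in the kernel, its leading monomial m shares its
   fiber with a smaller monomial of f, so m is not the least element of its fiber.  But if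
   t_i t_(n+j) <= t_j t_(n+i) whenever t_i t_(n+j) divides m, then m <= m' for every m' of the
   fiber: some t_j t_(n+i) divides m' while t_i t_(n+j) divides m, and trading the former for
   the latter gives a monomial m'' <= m' of the same fiber whose top row is closer to that of
   m.  Hence some t_i t_(n+j) dividing m is the leading monomial of an element of U_n, up to
   sign. *)

Lemma ltn_sum (I : finType) (f g : I -> nat) i0 :
  (forall i, f i <= g i)%N -> (f i0 < g i0)%N -> (\sum_i f i < \sum_i g i)%N.
Proof.
move=> le_fg lt_i0; rewrite (bigD1 i0) //= [X in (_ < X)%N](bigD1 i0) //=.
by rewrite -addSn leq_add // leq_sum.
Qed.

Lemma sum_eq_exists_gt (I : finType) (f g : I -> nat) i0 :
  \sum_i f i = \sum_i g i -> (f i0 < g i0)%N -> exists j, (g j < f j)%N.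
Proof.
move=> Esum lt_i0; apply/existsP; apply: contraT; rewrite negb_exists => /forallP not_gt.
suff: (\sum_i f i < \sum_i g i)%N by rewrite Esum ltnn.
by apply: ltn_sum lt_i0 => i; rewrite leqNgt not_gt.
Qed.

Section Exponents.
Variable p : nat.
Implicit Types m : 'X_{1..p}.

Definition mexp m (k : nat) : nat := nth 0%N m k.

Lemma mexpE m (i : 'I_p) : mexp m i = m i.
Proof. by rewrite /mexp -mnm_nth. Qed.

Lemma mexp_default m k : (p <= k)%N -> mexp m k = 0%N.
Proof. by move=> le_pk; rewrite /mexp nth_default // size_tuple. Qed.

Lemma mexp_multinom (E : nat -> nat) k :
  (k < p)%N -> mexp [multinom E i | i < p] k = E k.
Proof. by move=> lt_kp; rewrite -[k]/(nat_of_ord (Ordinal lt_kp)) mexpE mnmE. Qed.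

Lemma mexpD m1 m2 k : mexp (m1 + m2)%MM k = (mexp m1 k + mexp m2 k)%N.
Proof.
case: (ltnP k p) => [lt_kp | le_pk]; last by rewrite !mexp_default.
by rewrite -[k]/(nat_of_ord (Ordinal lt_kp)) !mexpE mnmDE.
Qed.

Lemma mexp_inj m1 m2 : (forall k, k < p -> mexp m1 k = mexp m2 k)%N -> m1 = m2.
Proof. by move=> E; apply/mnmP => i; rewrite -!mexpE E. Qed.

Lemma mexp_lep m1 m2 :
  (forall k, k < p -> mexp m1 k <= mexp m2 k)%N -> (m1 <= m2)%MM.
Proof. by move=> le12; apply/mnm_lepP => i; rewrite -!mexpE le12. Qed.

End Exponents.

Section LeadingMonomial.
Variables (K : fieldType) (k : nat) (le : rel 'X_{1..k}).
Implicit Types (f : {mpoly K[k]}) (m : 'X_{1..k}).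

Lemma is_lead_mono_neq0 f m : is_lead_mono le f m -> f != 0.
Proof. by case/andP => mf _; apply: contraTneq mf => ->; rewrite msupp0. Qed.

Lemma is_lead_monoN f m : is_lead_mono le (- f) m = is_lead_mono le f m.
Proof. by rewrite /is_lead_mono (perm_mem (msuppN f)) (perm_all _ (msuppN f)). Qed.

Hypotheses (le_refl : reflexive le) (le_trans : transitive le) (le_total : total le).

Lemma is_lead_mono_binomial m1 m2 : m1 != m2 -> le m2 m1 ->
  is_lead_mono le ('X_[m1] - 'X_[m2] : {mpoly K[k]}) m1.
Proof.
move=> ne12 le21; apply/andP; split.
  rewrite mcoeff_msupp mcoeffB !mcoeffX eqxx [m2 == m1]eq_sym (negbTE ne12).
  by rewrite subr0 oner_neq0.
apply/allP => m; rewrite mcoeff_msupp mcoeffB !mcoeffX.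
have [<- _ | ne1m] := eqVneq m1 m; first exact: le_refl.
have [<- // | ne2m] := eqVneq m2 m.
by rewrite subrr eqxx.
Qed.

Lemma exists_lead_mono f : f != 0 -> exists m, is_lead_mono le f m.
Proof.
rewrite -msupp_eq0 /is_lead_mono; elim: (msupp f) => [|m s IH] //= _.
have [-> | /IH[m' /andP[m's all_m']]] := eqVneq s [::].
  by exists m; rewrite mem_seq1 eqxx /= le_refl.
have [le_mm' | le_m'm] := orP (le_total m m').
  by exists m'; rewrite in_cons m's orbT le_mm'.
exists m; rewrite in_cons eqxx le_refl /=; apply/allP => y /(allP all_m') le_ym'.
exact: le_trans le_ym' le_m'm.
Qed.

End LeadingMonomial.

Lemma comp_mpoly_kernel_fiber (K : fieldType) k l (lq : k.-tuple {mpoly K[l]})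
    (phi : 'X_{1..k} -> 'X_{1..l}) (f : {mpoly K[k]}) m :
  (forall m, 'X_[m] \mPo lq = 'X_[phi m]) -> f \mPo lq = 0 -> m \in msupp f ->
  exists2 m', m' \in msupp f & (m' != m) && (phi m' == phi m).
Proof.
move=> compX f0 mf; apply/hasP; apply: contraLR (mf) => /hasPn no_m'.
have := congr1 (mcoeff (phi m)) f0.
rewrite comp_mpolyEX raddf_sum mcoeff0 (bigD1_seq m) ?msupp_uniq //= big1_seq.
  by rewrite mcoeffZ compX mcoeffX eqxx mulr1 addr0 mcoeff_msupp => ->; rewrite eqxx.
move=> m' /andP[ne_m' m'f]; rewrite mcoeffZ compX mcoeffX.
by move: (no_m' m' m'f); rewrite ne_m' /= => /negbTE ->; rewrite mulr0.
Qed.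

Section StarCode.
Variable n : nat.
Hypothesis n_gt0 : (0 < n)%N.
Variable K : fieldType.
Implicit Types m : 'X_{1..2 * n}.

Lemma s_top c k : (c < n)%N ->
  s n c.+1 k.+1 = ((k == 0%N) + ((k == c.+1) && (c.+1 < n)) + (k == n))%N.
Proof. by move=> lt_cn; rewrite /s /e; do ![case: ifP | case: eqP]; lia. Qed.

Lemma s_bot c k : (c < n)%N ->
  s n (n + c).+1 k.+1 = (((k == c.+1) && (c.+1 < n)) + (k == n))%N.
Proof. by move=> lt_cn; rewrite /s /e; do ![case: ifP | case: eqP]; lia. Qed.

Definition top_sum m : nat := \sum_(c < n) mexp m c.

Definition col_sum m (c : nat) : nat := mexp m c + mexp m (n + c).

Definition star_image m : 'X_{1..n.+1} :=
  [multinom if i == 0%N :> nat then top_sum m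
            else if (i < n)%N then col_sum m i.-1
            else \sum_(c < n) col_sum m c | i < n.+1].

Lemma mexp_star_image m k : (k < n.+1)%N ->
  mexp (star_image m) k = if k == 0%N then top_sum m
    else if (k < n)%N then col_sum m k.-1 else \sum_(c < n) col_sum m c.
Proof. by move=> lt_k; rewrite -[k]/(nat_of_ord (Ordinal lt_k)) mexpE mnmE. Qed.

Lemma sum_halves (F : nat -> nat) :
  (\sum_(i < 2 * n) F i = \sum_(c < n) (F c + F (n + c)))%N.
Proof.
rewrite mul2n -addnn big_split /= -!(big_mkord xpredT).
rewrite (big_cat_nat _ (leq_addr n n)) //=; congr (_ + _)%N.
rewrite -{1}[n]add0n big_addn addnK big_mkord.
by apply: eq_bigr => i _; rewrite addnC.
Qed.

Lemma sum_col_indicator (x : nat -> nat) k :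
  (\sum_(c < n) ((k == c.+1) && (c.+1 < n)) * x c = if 0 < k < n then x k.-1 else 0)%N.
Proof.
case: ifP => [/andP[k_gt0 lt_kn] | out_k].
  have lt_k1n : (k.-1 < n)%N by lia.
  rewrite (bigD1 (Ordinal lt_k1n)) //= prednK // eq_refl lt_kn mul1n big1 ?addn0 //.
  move=> c /eqP ne_c; case: eqP => [eq_k | //].
  by case: ne_c; apply: val_inj; rewrite /= eq_k.
by apply: big1 => c _; case: eqP => [eq_k | _] //=; move: out_k; rewrite eq_k /=; case: ltnP.
Qed.

Lemma star_image_sum m k : (k < n.+1)%N ->
  (\sum_(i < 2 * n) s n i.+1 k.+1 * m i)%N = mexp (star_image m) k.
Proof.
move=> lt_k; under eq_bigr do rewrite -mexpE.
transitivity (\sum_(c < n) ((k == 0%N) * mexp m c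
    + ((k == c.+1) && (c.+1 < n)) * col_sum m c + (k == n) * col_sum m c))%N.
  rewrite (sum_halves (fun i => s n i.+1 k.+1 * mexp m i)); apply: eq_bigr => c _.
  rewrite s_top // s_bot // /col_sum; nia.
rewrite !big_split -!big_distrr /= sum_col_indicator mexp_star_image //.
case: k lt_k => [|k] lt_k /=; first by rewrite mul1n addn0 eq_sym (gtn_eqF n_gt0) mul0n addn0.
rewrite mul0n add0n; case: ifP => lt_kn; first by rewrite (ltn_eqF lt_kn) addn0.
have -> : k.+1 = n by lia.
by rewrite /= eq_refl mul1n.
Qed.

Lemma comp_toric_mpolyX m :
  'X_[m] \mPo toric_map K n = 'X_[star_image m].
Proof.
rewrite comp_mpolyX (eq_bigr (fun i : 'I_(2 * n) => 'X_[[multinom s n i.+1 j.+1 | j < n.+1]] ^+ m i));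
  last by move=> i _; rewrite tnth_mktuple.
rewrite mprodXnE; congr 'X_[_]; apply/mnmP => j.
rewrite mnm_sumE -mexpE -star_image_sum //; apply: eq_bigr => i _.
by rewrite mulmnE mnmE mulnC.
Qed.

Lemma star_imageD m1 m2 :
  star_image (m1 + m2)%MM = (star_image m1 + star_image m2)%MM.
Proof.
have col_sumD c : col_sum (m1 + m2)%MM c = (col_sum m1 c + col_sum m2 c)%N.
  by rewrite /col_sum !mexpD addnACA.
have top_sumD : top_sum (m1 + m2)%MM = (top_sum m1 + top_sum m2)%N.
  by rewrite /top_sum -big_split; apply: eq_bigr => c _; rewrite mexpD.
have sum_colD : (\sum_(c < n) col_sum (m1 + m2)%MM c
    = \sum_(c < n) col_sum m1 c + \sum_(c < n) col_sum m2 c)%N.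
  by rewrite -big_split; apply: eq_bigr => c _; rewrite col_sumD.
apply/mnmP => j; rewrite mnmDE !mnmE top_sumD sum_colD col_sumD.
by case: eqP => _ //; case: ifP.
Qed.

Lemma star_image_eq m m' : star_image m = star_image m' <->
  top_sum m = top_sum m' /\ (forall c, c < n -> col_sum m c = col_sum m' c)%N.
Proof.
split=> [E | [Etop Ecol]]; last first.
  apply/mnmP => j; rewrite !mnmE Etop.
  rewrite (eq_bigr (fun c : 'I_n => col_sum m' c)) => [|c _]; last exact: Ecol.
  by case: ifP => // _; case: ifP => lt_jn //; rewrite Ecol //; lia.
have coord k : (k < n.+1)%N ->
    (if k == 0%N then top_sum m else if (k < n)%N then col_sum m k.-1
     else \sum_(c < n) col_sum m c)
    = (if k == 0%N then top_sum m' else if (k < n)%N then col_sum m' k.-1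
       else \sum_(c < n) col_sum m' c).
  by move=> lt_k; rewrite -!mexp_star_image // E.
have col_lt c : (c.+1 < n)%N -> col_sum m c = col_sum m' c.
  by move=> lt_cn; have := coord c.+1 (ltnW lt_cn); rewrite /= lt_cn.
split; first exact: coord 0%N isT.
move=> c lt_cn; have [/col_lt // | le_nc] := ltnP c.+1 n.
(* The last column has no coordinate of its own: recover it from the total degree. *)
have := coord n (ltnSn n); rewrite (gtn_eqF n_gt0) ltnn.
rewrite (bigD1 (Ordinal lt_cn)) //= [X in _ = X -> _](bigD1 (Ordinal lt_cn)) //=.
rewrite (eq_bigr (fun c' : 'I_n => col_sum m' c')) => [|c' /eqP ne_c']; first exact: addIn.
apply: col_lt; have := ltn_ord c'; suff : (c' : nat) <> c by lia.
by move=> eq_c'; apply: ne_c'; apply: val_inj.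
Qed.

(* [tpair c d] is the exponent of t_(c+1) t_(n+d+1): indices are shifted by one. *)
Definition tpair (c d : nat) : 'X_{1..2 * n} :=
  [multinom ((i == c :> nat) + (i == n + d :> nat))%N | i < 2 * n].

Lemma mexp_tpair c d k : (c < n)%N -> (d < n)%N ->
  mexp (tpair c d) k = ((k == c) + (k == n + d))%N.
Proof.
move=> lt_cn lt_dn; case: (ltnP k (2 * n)) => [lt_k | le_k].
  exact: (mexp_multinom (fun k => (k == c) + (k == n + d))%N).
by rewrite mexp_default //; do 2 case: eqP => [?|_]; lia.
Qed.

Lemma mexp_tpair_top c d k : (c < n)%N -> (d < n)%N -> (k < n)%N ->
  mexp (tpair c d) k = (k == c).
Proof. by move=> lt_cn lt_dn lt_kn; rewrite mexp_tpair //; case: eqP; lia. Qed.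

Lemma top_sum_tpair c d : (c < n)%N -> (d < n)%N -> top_sum (tpair c d) = 1%N.
Proof.
move=> lt_cn lt_dn; rewrite /top_sum (bigD1 (Ordinal lt_cn)) //= big1 => [|e ne_e].
  by rewrite mexp_tpair_top // eq_refl.
rewrite mexp_tpair_top //; apply/eqP; rewrite eqb0; apply: contra ne_e => /eqP eq_e.
by apply/eqP/val_inj.
Qed.

Lemma col_sum_tpair c d e : (c < n)%N -> (d < n)%N -> (e < n)%N ->
  col_sum (tpair c d) e = ((e == c) + (e == d))%N.
Proof.
move=> lt_cn lt_dn lt_en; rewrite /col_sum !mexp_tpair // eqn_add2l.
by do ![case: eqP]; lia.
Qed.

Lemma tpair_same_image c d : (c < n)%N -> (d < n)%N ->
  star_image (tpair c d) = star_image (tpair d c).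
Proof.
move=> lt_cn lt_dn; apply/star_image_eq; split; first by rewrite !top_sum_tpair.
by move=> e lt_en; rewrite !col_sum_tpair // addnC.
Qed.

Lemma tpair_neq c d : (c < n)%N -> (d < n)%N -> c != d -> tpair c d != tpair d c.
Proof.
move=> lt_cn lt_dn /negbTE ne_cd; apply/eqP => /(congr1 (fun mm => mexp mm c)).
by rewrite !mexp_tpair_top // eq_refl ne_cd.
Qed.

Lemma tpair_lep m c d : (c < n)%N -> (d < n)%N ->
  (0 < mexp m c)%N -> (0 < mexp m (n + d))%N -> (tpair c d <= m)%MM.
Proof.
move=> lt_cn lt_dn pos_c pos_d; apply: mexp_lep => k _; rewrite mexp_tpair //.
by case: eqP => [->|_]; case: eqP => [eq_k|_]; rewrite ?eq_k; lia.
Qed.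

Lemma t_mul_t c d :
  t K n c.+1 * t K n (n + d.+1) = 'X_[tpair c d].
Proof. by rewrite /t -mpolyXD; congr 'X_[_]; apply/mnmP => i; rewrite mnmDE !mnmE addnS !eqSS. Qed.

Lemma U_tpair c d : (c < d)%N -> (d < n)%N ->
  @U K n ('X_[tpair c d] - 'X_[tpair d c]).
Proof. by move=> lt_cd lt_dn; exists c.+1, d.+1; rewrite !t_mul_t. Qed.

Lemma U_tpair_or_opp (c d : 'I_n) : c != d ->
  @U K n ('X_[tpair c d] - 'X_[tpair d c]) \/ @U K n (- ('X_[tpair c d] - 'X_[tpair d c])).
Proof.
move=> ne_cd; rewrite opprB.
case: (ltngtP c d) => [lt_cd | lt_dc | /val_inj eq_cd]; last by rewrite eq_cd eqxx in ne_cd.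
  by left; apply: U_tpair lt_cd (ltn_ord d).
by right; apply: U_tpair lt_dc (ltn_ord c).
Qed.

Lemma U_sub_toric_ideal g : @U K n g -> @toric_ideal K n g.
Proof.
case=> i [j [i_gt0 lt_ij le_jn ->]].
case: i i_gt0 lt_ij => // i _ lt_ij; case: j lt_ij le_jn => // j lt_ij le_jn.
rewrite /toric_ideal !t_mul_t comp_mpolyB !comp_toric_mpolyX.
by rewrite tpair_same_image ?subrr //; lia.
Qed.

Lemma exists_exchange m m' : star_image m = star_image m' -> m != m' ->
  exists i j : 'I_n, (mexp m' i < mexp m i)%N /\ (mexp m j < mexp m' j)%N.
Proof.
move=> /star_image_eq[Etop Ecol] ne_mm'.
have [c ne_c] : exists c : 'I_n, mexp m c != mexp m' c.
  apply/existsP; apply: contraNT ne_mm'; rewrite negb_exists => /forallP eq_top.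
  have top_eq k : (k < n)%N -> mexp m k = mexp m' k.
    by move=> lt_kn; apply/eqP; rewrite -[k]/(nat_of_ord (Ordinal lt_kn)); apply/negPn/eq_top.
  apply/eqP/mexp_inj => k lt_k; have [/top_eq // | le_nk] := ltnP k n.
  have lt_kn : (k - n < n)%N by lia.
  by have := Ecol _ lt_kn; rewrite /col_sum top_eq // subnKC //; lia.
have [i lt_i] : exists i : 'I_n, (mexp m' i < mexp m i)%N.
  case: ltngtP ne_c => // lt_c _; first exact: (sum_eq_exists_gt Etop lt_c).
  by exists c.
have [j lt_j] := sum_eq_exists_gt (esym Etop) lt_i.
by exists i, j.
Qed.

Definition top_dist m m' : nat := \sum_(c < n) (mexp m c - mexp m' c).

Lemma top_dist_exchange m r (i j : 'I_n) : i != j ->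
    (mexp (tpair j i + r) i < mexp m i)%N -> (mexp m j < mexp (tpair j i + r) j)%N ->
  (top_dist m (tpair i j + r) < top_dist m (tpair j i + r))%N.
Proof.
move=> ne_ij; have /negbTE ne_ij' : (i : nat) != j := ne_ij.
rewrite !mexpD !mexp_tpair_top // eq_refl ne_ij' => lt_i lt_j.
apply: (ltn_sum (i0 := i)) => [c|]; rewrite !mexpD !mexp_tpair_top //; last first.
  by rewrite eq_refl ne_ij'; lia.
case: eqP => [/val_inj -> | _]; first by rewrite ne_ij'; lia.
by case: eqP => [/val_inj -> | _]; lia.
Qed.

Section Descent.
Variable le : rel 'X_{1..2 * n}.
Hypotheses (le_refl : reflexive le) (le_trans : transitive le).
Hypothesis le_addr : forall m1 m2 u, le m1 m2 -> le (m1 + u)%MM (m2 + u)%MM.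

Lemma no_descent_fiber_min m :
  (forall i j : 'I_n, i != j -> (tpair i j <= m)%MM -> le (tpair i j) (tpair j i)) ->
  forall m', star_image m = star_image m' -> le m m'.
Proof.
move=> no_descent m'; have [N] := ubnP (top_dist m m'); elim: N m' => // N IH m' lt_dist fib.
have [<- | ne_mm'] := eqVneq m m'; first exact: le_refl.
have [i [j [lt_i lt_j]]] := exists_exchange fib ne_mm'.
have ne_ij : i != j by apply: contraTneq lt_i => ->; rewrite -leqNgt ltnW.
have [_ Ecol] := (star_image_eq m m').1 fib.
have := Ecol i (ltn_ord i); have := Ecol j (ltn_ord j); rewrite /col_sum => col_j col_i.
have desc_m : (tpair i j <= m)%MM by apply: tpair_lep => //; lia.
have desc_m' : (tpair j i <= m')%MM by apply: tpair_lep => //; lia.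
set r := (m' - tpair j i)%MM.
have Em' : m' = (tpair j i + r)%MM by rewrite addmC submK.
have fib' : star_image m = star_image (tpair i j + r)%MM.
  by rewrite star_imageD tpair_same_image // -star_imageD -Em'.
have lt_dist' : (top_dist m (tpair i j + r) < top_dist m m')%N.
  by rewrite Em'; apply: top_dist_exchange; rewrite -?Em'.
apply: le_trans (IH _ _ fib') _; first lia.
by rewrite [in X in le _ X]Em'; apply/le_addr/no_descent.
Qed.

Lemma exists_descent m m' : star_image m = star_image m' -> ~~ le m m' ->
  exists i j : 'I_n,
    [/\ i != j, (tpair i j <= m)%MM & ~~ le (tpair i j) (tpair j i)].
Proof.
move=> fib not_le.
have /existsP[i /existsP[j /and3P[ne_ij desc not_le_ij]]] : [exists i : 'I_n, exists j : 'I_n,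
    [&& i != j, (tpair i j <= m)%MM & ~~ le (tpair i j) (tpair j i)]].
  apply: contraNT not_le; rewrite negb_exists => /forallP no_desc.
  apply: no_descent_fiber_min fib => i j ne_ij desc; move: (no_desc i).
  by rewrite negb_exists => /forallP /(_ j); rewrite ne_ij desc negbK.
by exists i, j.
Qed.

End Descent.

End StarCode.

Theorem mainTheorem2 (K : fieldType) (n : nat) (hn : (1 <= n)%N) :
  universal_groebner_basis (@toric_ideal K n) (@U K n).
Proof.
move=> le [[le_refl le_anti le_trans le_total] [_ le_addr]].
split=> [|f If f_neq0]; first exact: U_sub_toric_ideal.
have [mf lead_f] := exists_lead_mono le_refl le_trans le_total f_neq0.
have /andP[mf_f all_le_mf] := lead_f.
have [m' m'_f /andP[ne_m' /eqP fib]] :=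
  comp_mpoly_kernel_fiber (comp_toric_mpolyX hn K) If mf_f.
have not_le : ~~ le mf m'.
  by apply: contra ne_m' => le_mf; rewrite (le_anti m' mf) // (allP all_le_mf).
have [c [d [ne_cd desc not_le_cd]]] :=
  exists_descent hn le_refl le_trans le_addr (esym fib) not_le.
have le_dc : le (tpair n d c) (tpair n c d).
  by case/orP: (le_total (tpair n c d) (tpair n d c)) not_le_cd => ->.
have lead_cd := is_lead_mono_binomial K le_refl (tpair_neq hn (ltn_ord c) (ltn_ord d) ne_cd) le_dc.
have [g Ug lead_g] : exists2 g, @U K n g & is_lead_mono le g (tpair n c d).
  case: (U_tpair_or_opp K ne_cd) => Ug; first by exists ('X_[tpair n c d] - 'X_[tpair n d c]).
  by exists (- ('X_[tpair n c d] - 'X_[tpair n d c])); rewrite ?is_lead_monoN.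
exists g; split=> //; first exact: is_lead_mono_neq0 lead_g.
by exists mf, (tpair n c d).
Qed.
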